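(* Let $G=(V,E)$ be a finite undirected graph and run the neighborhood-expansion (NE) edge-partitioning algorithm described in the context to build partitions $p_1,\dots,p_k$ of $E$. Suppose that during the construction of partition $p_i$ a vertex $v$ is added to the secondary set $S_i$. Then the adjacency list of $v$ (the list $N(v)$ of its neighbors) is accessed again during the construction of some subsequent partition $p_j$, $j>i$, only if $v$ is still in $S_i$ and not in the core set $C$ when the construction of $p_i$ has been completed, i.e., only if $v$ was not moved to $C$ during the construction of $p_i$.
   Context: Edge partitioning: given an undirected graph $G=(V,E)$ and an integer $k>1$, the edge set is divided into disjoint sets (partitions) $p_1,\dots,p_k$ whose union is $E$. For a vertex $v$, $N(v)$ denotes its set of neighbors in the current graph and $d(v)$ its degree. The NE algorithm maintains a global vertex set $C$ (the core set, initially empty) and, for each partition $p_i$, a vertex set $S_i$ (the secondary set of $p_i$, initially empty); vertices are only ever added to these sets, never removed. Each vertex $u\in S_i$ carries a number $d_{ext}(u,S_i)$ (its external degree). Partitions are built in sequence $i=1,\dots,k$. While building $p_i$, as long as $|p_i|<|E|/k$: if $S_i\setminus C\neq\emptyset$, choose $v_{min}\in S_i\setminus C$ minimizing $d_{ext}(v,S_i)$ and call MoveToCore$(v_{min})$; otherwise (Initialize) choose any vertex $v\notin C$ and call MoveToCore$(v)$. MoveToCore$(v)$: add $v$ to $C$; then for each $u\in N(v)\setminus(C\cup S_i)$ call MoveToSecondary$(u)$. MoveToSecondary$(v)$: add $v$ to $S_i$; set $d_{ext}(v,S_i)\gets d(v)$; then for each $u\in N(v)\cap(C\cup S_i)$: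 decrement $d_{ext}(u,S_i)$ and $d_{ext}(v,S_i)$ by one; if $|p_i|<|E|/k$, assign edge $(u,v)$ to $p_i$, otherwise assign it to $p_{i+1}$ and add $u$ and $v$ to $S_{i+1}$ (''spill-over''); in both cases remove the edge $(u,v)$ from the graph. The adjacency list of a vertex $v$ is said to be accessed when the algorithm iterates over $N(v)$, which happens exactly within MoveToCore$(v)$ and MoveToSecondary$(v)$. *)

(* Formal model of the NE (neighborhood expansion) edge
   partitioning algorithm as a nondeterministic big-step semantics that
   records an event log. *)
From mathcomp Require Import all_boot all_order all_algebra.
Set Implicit Arguments. Unset Strict Implicit. Unset Printing Implicit Defensive.
Import GRing.Theory.
From Stdlib Require List.
Local Open Scope ring_scope.

Section NE.
Variable T : finType.

Inductive event : Type :=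
  | Access of nat & T          (* adjacency list of v accessed while building p_i *)
  | AddSec of nat & T          (* v added to S_i by MoveToSecondary while building p_i *)
  | EndPhase of nat & {set T} & {set T}.
                               (* construction of p_i finished, with C and S_i at that time *)

Record state := State {
  rem  : {set {set T}};        (* edges of the current graph (2-element sets) *)
  core : {set T};
  sec  : nat -> {set T};
  dext : nat -> T -> int;      (* (i, u) |-> d_ext(u, S_i) *)
  part : nat -> {set {set T}};
  log  : seq event }.

Definition nbr (r : {set {set T}}) (v : T) : {set T} := [set u | [set u; v] \in r].

(* |p_i| < |E| / k, with m = |E| *)
Definition below (m k : nat) (s : state) (i : nat) : bool := (#|part s i| * k < m)%N.

Definition upd {A : Type} (f : nat -> A) (i : nat) (a : A) : nat -> A :=
  fun j => if j == i then a else f j.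

Definition upd2 (f : nat -> T -> int) (i : nat) (u : T) (a : int) : nat -> T -> int :=
  fun j w => if (j == i) && (w == u) then a else f j w.

Definition logev (s : state) (e : event) : state :=
  State (rem s) (core s) (sec s) (dext s) (part s) (rcons (log s) e).

(* body of the loop of MoveToSecondary(v) for a neighbour u in C u S_i *)
Definition process_edge (m k i : nat) (v u : T) (s : state) : state :=
  let d1 := upd2 (dext s) i u (dext s i u - 1) in
  let d2 := upd2 d1 i v (d1 i v - 1) in
  let e := [set u; v] in
  if below m k s i then
    State (rem s :\ e) (core s) (sec s) d2 (upd (part s) i (e |: part s i)) (log s)
  else
    State (rem s :\ e) (core s)
          (upd (sec s) i.+1 (u |: (v |: sec s i.+1))) d2
          (upd (part s) i.+1 (e |: part s i.+1)) (log s).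

(* first part of MoveToSecondary(v) *)
Definition to_sec (i : nat) (v : T) (s : state) : state :=
  State (rem s) (core s) (upd (sec s) i (v |: sec s i))
        (upd2 (dext s) i v (#|nbr (rem s) v|)%:Z) (part s)
        (rcons (rcons (log s) (Access i v)) (AddSec i v)).

(* first part of MoveToCore(v) *)
Definition to_core (i : nat) (v : T) (s : state) : state :=
  State (rem s) (v |: core s) (sec s) (dext s) (part s) (rcons (log s) (Access i v)).

(* loop of MoveToSecondary(v) over a snapshot L of N(v), in any order *)
Inductive mts_loop (m k i : nat) (v : T) : seq T -> state -> state -> Prop :=
  | mts_nil s : mts_loop m k i v [::] s s
  | mts_in u L s s' : u \in core s :|: sec s i ->
      mts_loop m k i v L (process_edge m k i v u s) s' ->
      mts_loop m k i v (u :: L) s s'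
  | mts_out u L s s' : u \notin core s :|: sec s i ->
      mts_loop m k i v L s s' -> mts_loop m k i v (u :: L) s s'.

Inductive move_to_secondary (m k i : nat) (v : T) (s s' : state) : Prop :=
  | mts_intro L : perm_eq L (enum (nbr (rem s) v)) ->
      mts_loop m k i v L (to_sec i v s) s' -> move_to_secondary m k i v s s'.

(* loop of MoveToCore(v) over a snapshot L of N(v), in any order *)
Inductive mtc_loop (m k i : nat) : seq T -> state -> state -> Prop :=
  | mtc_nil s : mtc_loop m k i [::] s s
  | mtc_call u L s s1 s2 : u \notin core s :|: sec s i ->
      move_to_secondary m k i u s s1 -> mtc_loop m k i L s1 s2 ->
      mtc_loop m k i (u :: L) s s2
  | mtc_skip u L s s' : u \in core s :|: sec s i ->
      mtc_loop m k i L s s' -> mtc_loop m k i (u :: L) s s'.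

Inductive move_to_core (m k i : nat) (v : T) (s s' : state) : Prop :=
  | mtc_intro L : perm_eq L (enum (nbr (rem (to_core i v s)) v)) ->
      mtc_loop m k i L (to_core i v s) s' -> move_to_core m k i v s s'.

Definition end_phase (i : nat) (s : state) : state :=
  logev s (EndPhase i (core s) (sec s i)).

(* construction of partition p_i (the while loop) *)
Inductive phase (m k i : nat) : state -> state -> Prop :=
  | ph_stop s : ~~ below m k s i -> phase m k i s (end_phase i s)
  | ph_stuck s : below m k s i -> (forall v : T, v \in core s) ->
      (* no vertex is available any more: the phase cannot continue *)
      phase m k i s (end_phase i s)
  | ph_expand s v s1 s2 : below m k s i -> v \in sec s i :\: core s ->
      (forall w, w \in sec s i :\: core s -> (dext s i v <= dext s i w)%R) ->
      move_to_core m k i v s s1 -> phase m k i s1 s2 -> phase m k i s s2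
  | ph_init s v s1 s2 : below m k s i -> sec s i :\: core s = set0 ->
      v \notin core s ->
      move_to_core m k i v s s1 -> phase m k i s1 s2 -> phase m k i s s2.

Fixpoint phases (m k n i : nat) (s s' : state) : Prop :=
  match n with
  | 0 => s' = s
  | n'.+1 => exists s1, phase m k i s s1 /\ phases m k n' i.+1 s1 s'
  end.

Definition init_state (E : {set {set T}}) (dx0 : nat -> T -> int) : state :=
  State E set0 (fun _ => set0) dx0 (fun _ => set0) [::].

(* a complete run of NE building p_1, ..., p_k; dx0 gives the (unspecified)
   initial values of d_ext, relevant only for spilled-over vertices *)
Definition NE_run (E : {set {set T}}) (k : nat) (dx0 : nat -> T -> int)
  (final : state) : Prop :=
  phases #|E| k k 1 (init_state E dx0) final.

End NE.

(* Every access to an adjacency list during phase j is made for a vertex outside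
   the core set at that moment, and C only grows; so a vertex in C when phase i
   ends is never accessed in a later phase.  Likewise S_i only grows and no
   vertex is added to S_i after phase i ends, so a vertex ever added to S_i is
   in S_i at the end of phase i.  Both facts are kept as an invariant of the
   event log, indexed by the current phase. *)

From Pilot Require Import Defs.
From mathcomp Require Import all_boot all_order all_algebra.
From Stdlib Require List.

Set Implicit Arguments. Unset Strict Implicit. Unset Printing Implicit Defensive.

Lemma In_rcons (A : Type) (l : seq A) (x e : A) :
  List.In e (rcons l x) <-> List.In e l \/ x = e.
Proof. by rewrite -cats1 List.in_app_iff /=; intuition. Qed.

Section LogInvariant.
Variable T : finType.
Implicit Types (s : state T) (C S : {set T}) (v : T).

Record log_inv (p : nat) s : Prop := LogInv {
  access_le : forall j v, List.In (Access j v) (log s) -> (j <= p)%N;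
  addsec_mem : forall j v, List.In (AddSec j v) (log s) -> v \in sec s j;
  end_lt : forall i C S, List.In (EndPhase i C S) (log s) -> (i < p)%N;
  end_core_sub : forall i C S, List.In (EndPhase i C S) (log s) ->
    C \subset core s;
  end_sec_mem : forall i C S, List.In (EndPhase i C S) (log s) ->
    forall v, List.In (AddSec i v) (log s) -> v \in S;
  end_access_notin : forall i C S, List.In (EndPhase i C S) (log s) ->
    forall j v, List.In (Access j v) (log s) -> (i < j)%N -> v \notin C }.

Lemma log_inv_init E dx0 : log_inv 1 (init_state E dx0).
Proof. by split. Qed.

Lemma log_inv_grow p s s' : log_inv p s -> log s' = log s ->
  core s \subset core s' -> (forall j, sec s j \subset sec s' j) ->
  log_inv p s'.
Proof.
move=> [Hacc Hadd Hlt Hcore Hsec Hnot] Elog sub_core sub_sec.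
split; rewrite Elog //.
- by move=> j v /Hadd; apply: (subsetP (sub_sec j)).
- by move=> i C S /Hcore /subset_trans; apply.
Qed.

Lemma log_inv_access p v s : v \notin core s -> log_inv p s ->
  log_inv p (logev s (Access p v)).
Proof.
move=> vNC [Hacc Hadd Hlt Hcore Hsec Hnot]; split => /=.
- by move=> j w /In_rcons [/Hacc // | [-> _]].
- by move=> j w /In_rcons [/Hadd // | //].
- by move=> i C S /In_rcons [/Hlt // | //].
- by move=> i C S /In_rcons [/Hcore // | //].
- by move=> i C S /In_rcons [HE | //] w /In_rcons [/(Hsec _ _ _ HE) | //].
- move=> i C S /In_rcons [HE | //] j w /In_rcons [/(Hnot _ _ _ HE) // | ].
  by case=> _ <- _; apply: contra vNC; apply: subsetP (Hcore _ _ _ HE) v.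
Qed.

Lemma log_inv_addsec p v s : v \in sec s p -> log_inv p s ->
  log_inv p (logev s (AddSec p v)).
Proof.
move=> vS [Hacc Hadd Hlt Hcore Hsec Hnot]; split => /=.
- by move=> j w /In_rcons [/Hacc // | //].
- by move=> j w /In_rcons [/Hadd // | [<- <-]].
- by move=> i C S /In_rcons [/Hlt // | //].
- by move=> i C S /In_rcons [/Hcore // | //].
- move=> i C S /In_rcons [HE | //] w /In_rcons [/(Hsec _ _ _ HE) // | [ip _]].
  by have := Hlt _ _ _ HE; rewrite ip ltnn.
- by move=> i C S /In_rcons [HE | //] j w /In_rcons [/(Hnot _ _ _ HE) | //].
Qed.

Lemma log_inv_end_phase p s : log_inv p s -> log_inv p.+1 (end_phase p s).
Proof.
move=> [Hacc Hadd Hlt Hcore Hsec Hnot]; split => /=.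
- by move=> j w /In_rcons [/Hacc /leqW // | //].
- by move=> j w /In_rcons [/Hadd // | //].
- by move=> i C S /In_rcons [/Hlt /ltnW // | [<- _ _]].
- by move=> i C S /In_rcons [/Hcore // | [_ <- _]].
- move=> i C S /In_rcons [HE | [<- _ <-]] w /In_rcons [H | //].
    exact: Hsec HE _ H.
  exact: Hadd.
- move=> i C S /In_rcons [HE | [<- _ _]] j w /In_rcons [H | //].
    exact: Hnot HE _ _ H.
  by move=> pj; have := Hacc _ _ H; rewrite leqNgt pj.
Qed.

Lemma log_inv_process_edge p m k i v u s : log_inv p s ->
  log_inv p (process_edge m k i v u s).
Proof.
move=> I; apply: (log_inv_grow I); rewrite /process_edge; case: ifP => //= _ j.
by rewrite /upd; case: eqP => // ->; rewrite setUA subsetUr.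
Qed.

Lemma log_inv_to_sec p v s : v \notin core s -> log_inv p s ->
  log_inv p (to_sec p v s).
Proof.
move=> vNC /(log_inv_access vNC) I.
pose s1 := State (Defs.rem s) (core s) (upd (sec s) p (v |: sec s p))
  (upd2 (dext s) p v #|nbr (Defs.rem s) v|%:Z) (part s) (rcons (log s) (Access p v)).
have I1 : log_inv p s1.
  apply: (log_inv_grow I) => //= j.
  by rewrite /upd; case: eqP => // ->; apply: subsetUr.
by apply: (log_inv_addsec _ I1); rewrite /= /upd eqxx setU11.
Qed.

Lemma log_inv_to_core p v s : v \notin core s -> log_inv p s ->
  log_inv p (to_core p v s).
Proof.
move=> vNC /(log_inv_access vNC) I.
by apply: (log_inv_grow I) => //=; apply: subsetUr.
Qed.

Lemma log_inv_mts_loop m k p v L s s' : mts_loop m k p v L s s' ->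
  log_inv p s -> log_inv p s'.
Proof.
elim=> {L s s'} // u L s s' _ _ IH I.
exact/IH/log_inv_process_edge.
Qed.

Lemma log_inv_move_to_secondary m k p v s s' : v \notin core s ->
  move_to_secondary m k p v s s' -> log_inv p s -> log_inv p s'.
Proof.
by move=> vNC [L _ Hloop] /(log_inv_to_sec vNC) /(log_inv_mts_loop Hloop).
Qed.

Lemma log_inv_mtc_loop m k p L s s' : mtc_loop m k p L s s' ->
  log_inv p s -> log_inv p s'.
Proof.
elim=> {L s s'} // u L s s1 s2 + Hmts _ IH I.
rewrite in_setU negb_or => /andP[uNC _].
exact/IH/(log_inv_move_to_secondary uNC Hmts).
Qed.

Lemma log_inv_move_to_core m k p v s s' : v \notin core s ->
  move_to_core m k p v s s' -> log_inv p s -> log_inv p s'.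
Proof.
by move=> vNC [L _ Hloop] /(log_inv_to_core vNC) /(log_inv_mtc_loop Hloop).
Qed.

Lemma log_inv_phase m k p s s' : phase m k p s s' ->
  log_inv p s -> log_inv p.+1 s'.
Proof.
elim=> {s s'}.
- by move=> s _; apply: log_inv_end_phase.
- by move=> s _ _; apply: log_inv_end_phase.
- move=> s v s1 s2 _ /setDP[_ vNC] _ Hmtc _ IH I.
  exact/IH/(log_inv_move_to_core vNC Hmtc).
- move=> s v s1 s2 _ _ vNC Hmtc _ IH I.
  exact/IH/(log_inv_move_to_core vNC Hmtc).
Qed.

Lemma log_inv_phases m k n p s s' : phases m k n p s s' ->
  log_inv p s -> log_inv (p + n) s'.
Proof.
elim: n p s => [|n IH] p s /=; first by move=> ->; rewrite addn0.
move=> [s1 [Hphase Hrest]] /(log_inv_phase Hphase) I.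
by rewrite addnS -addSn; apply: IH Hrest I.
Qed.

End LogInvariant.

Theorem theorem1 (T : finType) (E : {set {set T}}) (k : nat) :
  (1 < k)%N ->
  (forall e, e \in E -> #|e| = 2%N) ->
  forall (dx0 : nat -> T -> int) (final : state T),
  NE_run E k dx0 final ->
  forall (i j : nat) (v : T) (Cend Siend : {set T}),
  (i < j)%N ->
  List.In (AddSec i v) (log final) ->
  List.In (EndPhase i Cend Siend) (log final) ->
  List.In (Access j v) (log final) ->
  v \in Siend /\ v \notin Cend.
Proof.
move=> _ _ dx0 final run i j v Cend Siend ij Hadd Hend Hacc.
have I : log_inv (1 + k) final := log_inv_phases run (log_inv_init E dx0).
split; [exact: (end_sec_mem I Hend Hadd) | exact: (end_access_notin I Hend Hacc ij)].
Qed.
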